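(* Let $c$ be a correct client following the client protocol described in the context, let $r$ be a \textsc{get} operation and $w$ a \textsc{put} operation issued by $c$, with $r$ issued before $w$. Then $\mathrm{ts}(w) > \mathrm{ts}(r)$.
   Context: Client model. A client $c$ has a physical clock whose reading $\mathsf{clock}_c$ is a positive real number that is strictly increasing in real time. The client keeps two variables, a dependency time $\mathsf{dt}_c$ and a common global stable time $\mathsf{cgst}_c$, both initially $0$; they are modified only as described below. A correct client issues its operations one at a time: an operation is issued only after the previous one has returned. Servers are grouped into partitions of $3f+1$ replicas each, and a quorum is a set of $2f+1$ replicas of one partition. \textsc{get}$(k)$: the client sets $ts \gets \max\{\mathsf{dt}_c, \mathsf{cgst}_c\}$ and sends a request carrying $ts$ to the replicas of the partition holding $k$. It then waits for replies from a quorum $Q$, each reply from replica $i\in Q$ carrying a value $v_i$ and a number $cgst_i$, sets $\mathsf{cgst}_c \gets \max\{\mathsf{cgst}_c, \min_{i\in Q} cgst_i\}$, and returns a value. \textsc{put}$(k,v)$: the client waits until $\mathsf{clock}_c > \mathsf{cgst}_c$, then sends a request carrying $(k, v, cl, c)$, where $cl$ is the current reading of $\mathsf{clock}_c$, to the replicas of the partition holding $k$. It then waits for replies from a quorum $Q$, each reply from $i\in Q$ carrying a number $cgst_i$, sets $\mathsf{cgst}_c \gets \max\{\mathsf{cgst}_c, \min_{i\in Q} cgst_i\}$, then sets $\mathsf{dt}_c$ to the current reading of $\mathsf{clock}_c$, and returns. Timestamps: for a \textsc{get} operation $o$, $\mathrm{ts}(o)$ is the value $ts=\max\{\mathsf{dt}_c,\mathsf{cgst}_c\}$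 computed when $o$ is issued; for a \textsc{put} operation $o$, $\mathrm{ts}(o)$ is the clock value $cl$ sent in its request. *)

From Stdlib Require Import Reals Lra List.
Import ListNotations.
Open Scope R_scope.

Definition clock_ok (clock : R -> R) : Prop :=
  (forall t, 0 < clock t) /\ (forall t1 t2, t1 < t2 -> clock t1 < clock t2).

(* Minimum of the cgst values carried by the replies of a quorum
   (a list of replies; the quorum is nonempty by [length = 2f+1]). *)
Definition minlist (l : list R) : R :=
  match l with
  | [] => 0
  | x :: xs => fold_left Rmin xs x
  end.

(* One operation of the client, with the real times at which its protocol
   steps happen and the cgst_i numbers carried by the quorum replies.
   - OGet ti tr reps : issued at ti, returns at tr.
   - OPut ti ts td tr reps : issued at ti, request sent at ts (cl = clock ts),
     dt set at td (after the replies), returns at tr. *)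
Inductive op : Type :=
  | OGet (t_issue t_ret : R) (replies : list R)
  | OPut (t_issue t_send t_dt t_ret : R) (replies : list R).

Definition is_get (o : op) : bool := match o with OGet _ _ _ => true | _ => false end.
Definition is_put (o : op) : bool := match o with OPut _ _ _ _ _ => true | _ => false end.

Definition t_issue (o : op) : R :=
  match o with OGet ti _ _ => ti | OPut ti _ _ _ _ => ti end.
Definition t_ret (o : op) : R :=
  match o with OGet _ tr _ => tr | OPut _ _ _ tr _ => tr end.

(* client state: (dt_c, cgst_c) *)
Definition cstate := (R * R)%type.
Definition init_state : cstate := (0, 0).

Definition step (clock : R -> R) (s : cstate) (o : op) : cstate :=
  match o with
  | OGet _ _ reps => (fst s, Rmax (snd s) (minlist reps))
  | OPut _ _ tdt _ reps => (clock tdt, Rmax (snd s) (minlist reps))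
  end.

Definition state_before (clock : R -> R) (ops : list op) (i : nat) : cstate :=
  fold_left (step clock) (firstn i ops) init_state.

Definition dummy_op : op := OGet 0 0 [].

Definition ts (clock : R -> R) (ops : list op) (i : nat) : R :=
  match nth i ops dummy_op with
  | OGet _ _ _ => Rmax (fst (state_before clock ops i)) (snd (state_before clock ops i))
  | OPut _ tsend _ _ _ => clock tsend
  end.

Definition op_ok (clock : R -> R) (f : nat) (s : cstate) (o : op) : Prop :=
  match o with
  | OGet ti tr reps => ti <= tr /\ length reps = (2 * f + 1)%nat
  | OPut ti tsend tdt tr reps =>
      ti <= tsend /\ clock tsend > snd s /\ tsend <= tdt /\ tdt <= tr /\
      length reps = (2 * f + 1)%nat
  end.

Definition correct_exec (clock : R -> R) (f : nat) (ops : list op) : Prop :=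
  (forall i, (i < length ops)%nat ->
     op_ok clock f (state_before clock ops i) (nth i ops dummy_op)) /\
  (forall i, (S i < length ops)%nat ->
     t_ret (nth i ops dummy_op) < t_issue (nth (S i) ops dummy_op)).

(* At a get r the timestamp is max(dt, cgst).  The cgst component only grows
   along the execution, and a later put w waits until its clock reading
   exceeds the current cgst.  The dt component is either 0 or the clock
   reading taken while an earlier put was still running, hence strictly
   before w was issued; since the clock is positive and strictly increasing,
   it is below the reading sent by w as well. *)
From Stdlib Require Import Reals List Lra Lia.
Import ListNotations.
Open Scope R_scope.

Lemma firstn_S_nth {A : Type} (d : A) (l : list A) (n : nat) :
  (n < length l)%nat -> firstn (S n) l = firstn n l ++ [nth n l d].
Proof.
  revert n; induction l as [|a l IH]; intros n Hn; simpl in *; [lia|].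
  destruct n as [|n]; simpl; [reflexivity|].
  rewrite (IH n) by lia; reflexivity.
Qed.

Lemma clock_le (clock : R -> R) (t1 t2 : R) :
  clock_ok clock -> t1 <= t2 -> clock t1 <= clock t2.
Proof.
  intros [_ Hinc] [Hlt | <-]; [left; apply Hinc; exact Hlt | right; reflexivity].
Qed.

Lemma state_before_S (clock : R -> R) (ops : list op) (n : nat) :
  (n < length ops)%nat ->
  state_before clock ops (S n) = step clock (state_before clock ops n) (nth n ops dummy_op).
Proof.
  intros Hn; unfold state_before.
  rewrite (firstn_S_nth dummy_op) by exact Hn.
  apply fold_left_app.
Qed.

Lemma cgst_before_mono (clock : R -> R) (ops : list op) (n m : nat) :
  (n <= m)%nat -> (m <= length ops)%nat ->
  snd (state_before clock ops n) <= snd (state_before clock ops m).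
Proof.
  induction 1 as [|m Hnm IH]; intros Hm; [lra|].
  rewrite state_before_S by lia.
  pose proof (IH ltac:(lia)).
  destruct (nth m ops dummy_op); simpl; eapply Rle_trans; eauto; apply Rmax_l.
Qed.

Section CorrectExecution.

Variables (clock : R -> R) (f : nat) (ops : list op).
Hypothesis Hexec : correct_exec clock f ops.

Lemma t_issue_le_t_ret (n : nat) :
  (n < length ops)%nat -> t_issue (nth n ops dummy_op) <= t_ret (nth n ops dummy_op).
Proof.
  intros Hn; pose proof (proj1 Hexec n Hn) as Hok.
  destruct (nth n ops dummy_op); simpl in *; lra.
Qed.

Lemma t_ret_lt_t_issue (n m : nat) :
  (n < m)%nat -> (m < length ops)%nat ->
  t_ret (nth n ops dummy_op) < t_issue (nth m ops dummy_op).
Proof.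
  induction 1 as [|m Hnm IH]; intros Hm.
  - exact (proj2 Hexec n Hm).
  - pose proof (IH ltac:(lia)).
    pose proof (t_issue_le_t_ret m ltac:(lia)).
    pose proof (proj2 Hexec m Hm).
    lra.
Qed.

Lemma dt_before_lt_clock_issue (n m : nat) :
  clock_ok clock -> (n <= m)%nat -> (m < length ops)%nat ->
  fst (state_before clock ops n) < clock (t_issue (nth m ops dummy_op)).
Proof.
  intros Hclock; induction n as [|n IH]; intros Hnm Hm.
  - apply (proj1 Hclock).
  - rewrite state_before_S by lia.
    pose proof (proj1 Hexec n ltac:(lia)) as Hok.
    pose proof (t_ret_lt_t_issue n m ltac:(lia) Hm) as Hret.
    destruct (nth n ops dummy_op) as [ti tr reps | ti tsend tdt tr reps]; simpl in *.
    + apply IH; lia.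
    + apply (proj2 Hclock); lra.
Qed.

End CorrectExecution.

Theorem lemma4 (clock : R -> R) (f : nat) (ops : list op) :
  clock_ok clock -> correct_exec clock f ops ->
  forall i j : nat, (i < j)%nat -> (j < length ops)%nat ->
  is_get (nth i ops dummy_op) = true -> is_put (nth j ops dummy_op) = true ->
  ts clock ops j > ts clock ops i.
Proof.
  intros Hclock Hexec i j Hij Hj Hget Hput.
  pose proof (proj1 Hexec j Hj) as Hput_ok.
  pose proof (cgst_before_mono clock ops i j ltac:(lia) ltac:(lia)) as Hcgst.
  pose proof (dt_before_lt_clock_issue clock f ops Hexec i j Hclock ltac:(lia) Hj) as Hdt.
  unfold ts.
  destruct (nth i ops dummy_op); simpl in Hget; try discriminate.
  destruct (nth j ops dummy_op) as [| ti tsend tdt tr reps]; simpl in Hput; try discriminate.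
  simpl in Hput_ok, Hdt; destruct Hput_ok as (Hsend & Hwait & _).
  pose proof (clock_le clock ti tsend Hclock Hsend).
  apply Rmax_lub_lt; lra.
Qed.
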